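(* Let $(F,+,\cdot)$ be a (left) near-field, $I$ an index set, and $\boldsymbol\sigma=(\sigma_i)_{i\in I}$, $\boldsymbol\rho=(\rho_i)_{i\in I}$ families of multiplicative automorphisms of $F$. Let $F^{\boldsymbol\sigma,\boldsymbol\rho}$ be the set of finitely supported families $(\alpha_i)_{i\in I}\in F^I$, with addition $(\alpha_i)_i+_{\boldsymbol\sigma}(\beta_i)_i=(\alpha_i+_{\sigma_i}\beta_i)_i$ and scalar multiplication $\alpha\cdot_{\boldsymbol\rho}(\alpha_i)_i=(\rho_i(\alpha)\alpha_i)_i$. Then $F^{\boldsymbol\sigma,\boldsymbol\rho}$ is a near-vector space over $F$, and for $\mathbf e_j=(\delta_{j,i})_{i\in I}$, every $j\in I$ and every $\gamma\in F\setminus\{0\}$, the element $\gamma\cdot_{\boldsymbol\rho}\mathbf e_j$ lies in the quasi-kernel and $$+_{\gamma\cdot_{\boldsymbol\rho}\mathbf e_j}=+_{\sigma_j\circ\rho_j\circ\varphi_\gamma}.$$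
   Context: A (left) near-field is $(F,+,\cdot,0,1)$ where $(F,\cdot,1)$ is a monoid, $(F\setminus\{0\},\cdot)$ is a group, $(F,+,0)$ is an abelian group, and $\alpha(\beta+\gamma)=\alpha\beta+\alpha\gamma$. A multiplicative automorphism is a monoid automorphism of $(F,\cdot)$. For a multiplicative automorphism $\tau$, $\alpha+_\tau\beta=\tau^{-1}(\tau(\alpha)+\tau(\beta))$. For $\gamma\neq0$, $\varphi_\gamma(\alpha)=\gamma^{-1}\alpha\gamma$. $\delta_{j,i}$ is $1$ if $i=j$ and $0$ otherwise. Near-vector space over $F$ (the scalar group $(F,\cdot,1,0,-1)$): an abelian group with a left action of $(F,\cdot)$ by endomorphisms, with $0,1,-1$ acting as $0,\mathrm{id},-\mathrm{id}$, the action free, and the quasi-kernel $Q(V)=\{u:\forall\alpha,\beta\in F\ \exists\gamma,\ \alpha u+\beta u=\gamma u\}$ generating $V$ additively. For $u\in Q(V)\setminus\{0\}$, $\alpha+_u\beta$ is the unique $\gamma$ with $\alpha u+\beta u=\gamma u$. *)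

From Stdlib Require Import List ClassicalDescription.
Import ListNotations.

Set Implicit Arguments.

Definition is_near_field (F : Type) (add mul : F -> F -> F) (zero one : F)
  (opp inv : F -> F) : Prop :=
  (forall a b c, mul a (mul b c) = mul (mul a b) c) /\
  (forall a, mul one a = a) /\ (forall a, mul a one = a) /\
  one <> zero /\
  (forall a b, a <> zero -> b <> zero -> mul a b <> zero) /\
  (forall a, a <> zero ->
     inv a <> zero /\ mul (inv a) a = one /\ mul a (inv a) = one) /\
  (forall a b c, add a (add b c) = add (add a b) c) /\
  (forall a b, add a b = add b a) /\
  (forall a, add zero a = a) /\
  (forall a, add (opp a) a = zero) /\
  (forall a b c, mul a (add b c) = add (mul a b) (mul a c)).

Definition is_mul_aut (F : Type) (mul : F -> F -> F) (one : F)
  (tau tauinv : F -> F) : Prop :=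
  (forall a, tauinv (tau a) = a) /\ (forall a, tau (tauinv a) = a) /\
  (forall a b, tau (mul a b) = mul (tau a) (tau b)) /\ tau one = one.

Definition tplus (F : Type) (add : F -> F -> F) (tau tauinv : F -> F)
  (a b : F) : F := tauinv (add (tau a) (tau b)).

Definition phi (F : Type) (mul : F -> F -> F) (inv : F -> F) (g a : F) : F :=
  mul (inv g) (mul a g).
Definition phiinv (F : Type) (mul : F -> F -> F) (inv : F -> F) (g a : F) : F :=
  mul g (mul a (inv g)).

Section NVS.
Variables (F : Type) (mul : F -> F -> F) (zero one : F) (opp : F -> F).
Variables (V : Type) (S : V -> Prop) (vadd : V -> V -> V) (act : F -> V -> V).

Definition quasi_kernel (u : V) : Prop :=
  S u /\ forall a b : F, exists c : F, vadd (act a u) (act b u) = act c u.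

(* S is additively generated by Q(V): every subgroup containing Q(V) is S *)
Definition generated_by_qk (z : V) : Prop :=
  forall T : V -> Prop,
    (forall u, T u -> S u) -> T z ->
    (forall u v, T u -> T v -> T (vadd u v)) ->
    (forall u v, T u -> S v -> vadd u v = z -> T v) ->
    (forall u, quasi_kernel u -> T u) ->
    forall v, S v -> T v.

Definition is_near_vector_space : Prop :=
  exists z : V, S z /\
  (forall u v, S u -> S v -> S (vadd u v)) /\
  (forall u v w, S u -> S v -> S w -> vadd u (vadd v w) = vadd (vadd u v) w) /\
  (forall u v, S u -> S v -> vadd u v = vadd v u) /\
  (forall u, S u -> vadd z u = u) /\
  (forall u, S u -> exists v, S v /\ vadd v u = z) /\
  (forall a u, S u -> S (act a u)) /\
  (forall a u v, S u -> S v -> act a (vadd u v) = vadd (act a u) (act a v)) /\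
  (forall a b u, S u -> act (mul a b) u = act a (act b u)) /\
  (forall u, S u -> act one u = u) /\
  (forall u, S u -> act zero u = z) /\
  (forall u, S u -> vadd (act (opp one) u) u = z) /\
  (forall a b u, S u -> act a u = act b u -> u = z \/ a = b) /\
  generated_by_qk z.

End NVS.

Definition fin_supp (I F : Type) (zero : F) (f : I -> F) : Prop :=
  exists l : list I, forall i, ~ In i l -> f i = zero.

Definition fam_add (I F : Type) (add : F -> F -> F) (sigma sigmainv : I -> F -> F)
  (f g : I -> F) : I -> F :=
  fun i => tplus add (sigma i) (sigmainv i) (f i) (g i).

Definition fam_act (I F : Type) (mul : F -> F -> F) (rho : I -> F -> F)
  (a : F) (f : I -> F) : I -> F :=
  fun i => mul (rho i a) (f i).

Definition unit_fam (I F : Type) (zero one : F) (j : I) : I -> F :=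
  fun i => if excluded_middle_informative (i = j) then one else zero.

(* Every coordinate of F^{σ,ρ} is a copy of F whose addition +_{σ_i} is the
   transport of + along σ_i and on which α acts by left multiplication with
   ρ_i(α); hence all near-vector-space axioms hold coordinatewise. The only
   axiom needing an argument is (-1)·u = -u, which rests on -1 being central in
   a near-field. Families supported on one index lie in the quasi-kernel and
   generate F^{σ,ρ}. Finally, right multiplication by ρ_j(γ) twists +_{σ_j}
   by the conjugation φ_γ, which gives the formula for +_{γ·e_j}. *)
From Stdlib Require Import List ClassicalDescription Classical FunctionalExtensionality.

Set Implicit Arguments.

Section NearField.
Variables (F : Type) (add mul : F -> F -> F) (zero one : F) (opp inv : F -> F).
Hypothesis HF : is_near_field add mul zero one opp inv.

Lemma mulA a b c : mul a (mul b c) = mul (mul a b) c.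
Proof. destruct HF as (X&_). apply X. Qed.
Lemma mul1l a : mul one a = a.
Proof. destruct HF as (_&X&_). apply X. Qed.
Lemma mul1r a : mul a one = a.
Proof. destruct HF as (_&_&X&_). apply X. Qed.
Lemma mul_neq0 a b : a <> zero -> b <> zero -> mul a b <> zero.
Proof. destruct HF as (_&_&_&_&X&_). apply X. Qed.
Lemma inv_neq0 a : a <> zero -> inv a <> zero.
Proof. destruct HF as (_&_&_&_&_&X&_). apply X. Qed.
Lemma mulVf a : a <> zero -> mul (inv a) a = one.
Proof. destruct HF as (_&_&_&_&_&X&_). apply X. Qed.
Lemma mulfV a : a <> zero -> mul a (inv a) = one.
Proof. destruct HF as (_&_&_&_&_&X&_). apply X. Qed.
Lemma addA a b c : add a (add b c) = add (add a b) c.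
Proof. destruct HF as (_&_&_&_&_&_&X&_). apply X. Qed.
Lemma addC a b : add a b = add b a.
Proof. destruct HF as (_&_&_&_&_&_&_&X&_). apply X. Qed.
Lemma add0l a : add zero a = a.
Proof. destruct HF as (_&_&_&_&_&_&_&_&X&_). apply X. Qed.
Lemma addNl a : add (opp a) a = zero.
Proof. destruct HF as (_&_&_&_&_&_&_&_&_&X&_). apply X. Qed.
Lemma mulDr a b c : mul a (add b c) = add (mul a b) (mul a c).
Proof. destruct HF as (_&_&_&_&_&_&_&_&_&_&X). apply X. Qed.

Lemma addIr x y z : add x y = add z y -> x = z.
Proof.
  intro E.
  rewrite <- (add0l x), <- (add0l z), <- (addNl y), <- !addA, !(addC y), E.
  reflexivity.
Qed.

Lemma oppr0 : opp zero = zero.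
Proof. rewrite <- (add0l (opp zero)), addC. apply addNl. Qed.

Lemma mulr0 a : mul a zero = zero.
Proof.
  apply (@addIr _ (mul a zero)).
  rewrite <- mulDr, !add0l. reflexivity.
Qed.

Lemma mulIf a b c : b <> zero -> mul a b = mul c b -> a = c.
Proof.
  intros Hb E. rewrite <- (mul1r a), <- (mul1r c), <- (mulfV Hb), !mulA, E.
  reflexivity.
Qed.

Lemma mul0r a : mul zero a = zero.
Proof.
  destruct (classic (a = zero)) as [->|Ha]; [apply mulr0|].
  apply NNPP. intro E. apply (mul_neq0 E (inv_neq0 Ha)).
  rewrite <- mulA, mulfV, mul1r by exact Ha. reflexivity.
Qed.

Lemma mulfK a x : x <> zero -> mul (mul a x) (inv x) = a.
Proof. intro Hx. rewrite <- mulA, mulfV, mul1r by exact Hx. reflexivity. Qed.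

Lemma divfK a x : x <> zero -> mul (mul a (inv x)) x = a.
Proof. intro Hx. rewrite <- mulA, mulVf, mul1r by exact Hx. reflexivity. Qed.

Lemma mulN1N1 : mul (opp one) (opp one) = one.
Proof.
  apply (@addIr _ (opp one)).
  rewrite <- (mul1r (opp one)) at 3. rewrite <- mulDr, addNl, mulr0, addC, addNl.
  reflexivity.
Qed.

Lemma sqr_eq1 x : mul x x = one -> x = one \/ x = opp one.
Proof.
  intro Hxx. destruct (classic (add x one = zero)) as [E|E].
  - right. apply (@addIr _ one). rewrite E, addNl. reflexivity.
  - left. apply (mulIf E). rewrite mulDr, Hxx, mul1r, mul1l, addC. reflexivity.
Qed.

(* Only left distributivity is available, so to compute (-1)x + x we move -1
   to the right of x: the conjugate x^-1 (-1) x squares to 1, so it is ±1. *)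
Lemma mulN1C x : mul (opp one) x = mul x (opp one).
Proof.
  destruct (classic (x = zero)) as [->|Hx]; [rewrite mul0r, mulr0; reflexivity|].
  set (y := mul (inv x) (mul (opp one) x)).
  assert (Hyy : mul y y = one).
  { unfold y.
    rewrite !mulA, mulfK, <- (mulA (inv x) (opp one) (opp one)), mulN1N1, mul1r
      by exact Hx.
    apply mulVf, Hx. }
  assert (Ey : mul (opp one) x = mul x y).
  { unfold y. rewrite mulA, mulfV, mul1l by exact Hx. reflexivity. }
  rewrite Ey. destruct (sqr_eq1 Hyy) as [Hy|Hy]; rewrite Hy; [|reflexivity].
  assert (N1 : opp one = one)
    by (apply (mulIf Hx); rewrite Ey, Hy, mul1r, mul1l; reflexivity).
  rewrite N1. reflexivity.
Qed.

Lemma add_mulN1l x : add (mul (opp one) x) x = zero.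
Proof.
  rewrite mulN1C. rewrite <- (mul1r x) at 2. rewrite <- mulDr, addNl. apply mulr0.
Qed.

Section Automorphism.
Variables tau taui : F -> F.
Hypothesis Htau : is_mul_aut mul one tau taui.

Lemma autK a : taui (tau a) = a.
Proof. destruct Htau as (X&_). apply X. Qed.
Lemma autiK a : tau (taui a) = a.
Proof. destruct Htau as (_&X&_). apply X. Qed.
Lemma autM a b : tau (mul a b) = mul (tau a) (tau b).
Proof. destruct Htau as (_&_&X&_). apply X. Qed.
Lemma aut1 : tau one = one.
Proof. destruct Htau as (_&_&_&X). apply X. Qed.

Lemma autiM a b : taui (mul a b) = mul (taui a) (taui b).
Proof. rewrite <- (autK (mul (taui a) (taui b))), autM, !autiK. reflexivity. Qed.

Lemma aut0 : tau zero = zero.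
Proof.
  transitivity (tau (mul zero (taui zero))); [rewrite mul0r; reflexivity|].
  rewrite autM, autiK. apply mulr0.
Qed.

Lemma auti0 : taui zero = zero.
Proof. rewrite <- aut0 at 1. apply autK. Qed.

Lemma aut_neq0 a : a <> zero -> tau a <> zero.
Proof. intros Ha E. apply Ha. rewrite <- (autK a), E. apply auti0. Qed.

Lemma autN1 : tau (opp one) = opp one.
Proof.
  assert (Hsq : mul (tau (opp one)) (tau (opp one)) = one)
    by (rewrite <- autM, mulN1N1; apply aut1).
  destruct (sqr_eq1 Hsq) as [E|E]; [|exact E].
  assert (N1 : opp one = one)
    by (rewrite <- (autK (opp one)), E, <- aut1 at 1; apply autK).
  rewrite E, N1. reflexivity.
Qed.

Lemma autV a : a <> zero -> tau (inv a) = inv (tau a).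
Proof.
  intro Ha. apply (mulIf (aut_neq0 Ha)).
  rewrite <- autM, !mulVf, aut1 by (exact Ha || exact (aut_neq0 Ha)). reflexivity.
Qed.

Lemma aut_phi g a : g <> zero -> tau (phi mul inv g a) = phi mul inv (tau g) (tau a).
Proof. intro Hg. unfold phi. rewrite !autM, autV by exact Hg. reflexivity. Qed.

Lemma aut_phiinv g a :
  g <> zero -> tau (phiinv mul inv g a) = phiinv mul inv (tau g) (tau a).
Proof. intro Hg. unfold phiinv. rewrite !autM, autV by exact Hg. reflexivity. Qed.

Notation tadd := (tplus add tau taui).

Lemma tplusC a b : tadd a b = tadd b a.
Proof. unfold tplus. rewrite addC. reflexivity. Qed.

Lemma tplusA a b c : tadd a (tadd b c) = tadd (tadd a b) c.
Proof. unfold tplus. rewrite !autiK, addA. reflexivity. Qed.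

Lemma tplus0l a : tadd zero a = a.
Proof. unfold tplus. rewrite aut0, add0l. apply autK. Qed.

Lemma tplusNl a : tadd (taui (opp (tau a))) a = zero.
Proof. unfold tplus. rewrite autiK, addNl. apply auti0. Qed.

Lemma mul_tplusr r a b : mul r (tadd a b) = tadd (mul r a) (mul r b).
Proof. unfold tplus. rewrite !autM, <- mulDr, autiM, autK. reflexivity. Qed.

Lemma tplus_mulr c a b :
  c <> zero ->
  tadd (mul a c) (mul b c)
  = mul (tplus add (fun x => tau (phi mul inv c x))
                   (fun x => phiinv mul inv c (taui x)) a b) c.
Proof.
  intro Hc. unfold tplus, phi, phiinv.
  rewrite (autM (inv c) (mul a c)), (autM (inv c) (mul b c)), <- mulDr, autiM, autK,
    !mulA, mulfV, mul1l, divfK by exact Hc.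
  reflexivity.
Qed.

End Automorphism.

Section Families.
Variables (I : Type) (sigma sigmainv rho rhoinv : I -> F -> F).
Hypothesis Hsigma : forall i, is_mul_aut mul one (sigma i) (sigmainv i).
Hypothesis Hrho : forall i, is_mul_aut mul one (rho i) (rhoinv i).

Local Notation supp := (fin_supp zero).
Local Notation vadd := (fam_add add sigma sigmainv).
Local Notation act := (fam_act mul rho).
Local Notation fam0 := (fun _ : I => zero).

Definition fam_opp (u : I -> F) : I -> F :=
  fun i => sigmainv i (opp (sigma i (u i))).

Definition single (j : I) (c : F) : I -> F :=
  fun i => if excluded_middle_informative (i = j) then c else zero.

Lemma fin_supp0 : supp fam0.
Proof. exists nil. reflexivity. Qed.

Lemma fin_supp_add u v : supp u -> supp v -> supp (vadd u v).
Proof.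
  intros [l1 H1] [l2 H2]. exists (l1 ++ l2). intros i Hi. unfold fam_add.
  rewrite H1, H2 by (intro; apply Hi, in_or_app; auto). apply (tplus0l (Hsigma i)).
Qed.

Lemma fin_supp_opp u : supp u -> supp (fam_opp u).
Proof.
  intros [l Hl]. exists l. intros i Hi. unfold fam_opp.
  rewrite Hl, (aut0 (Hsigma i)), oppr0 by exact Hi. apply (auti0 (Hsigma i)).
Qed.

Lemma fin_supp_act a u : supp u -> supp (act a u).
Proof.
  intros [l Hl]. exists l. intros i Hi. unfold fam_act. rewrite Hl by exact Hi.
  apply mulr0.
Qed.

Lemma fin_supp_single j c : supp (single j c).
Proof.
  exists (j :: nil). intros i Hi. unfold single.
  destruct (excluded_middle_informative (i = j)) as [->|]; [now destruct Hi; left|reflexivity].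
Qed.

Lemma fam_addA u v w : vadd u (vadd v w) = vadd (vadd u v) w.
Proof. extensionality i. apply (tplusA (Hsigma i)). Qed.

Lemma fam_addC u v : vadd u v = vadd v u.
Proof. extensionality i. apply tplusC. Qed.

Lemma fam_add0l u : vadd fam0 u = u.
Proof. extensionality i. apply (tplus0l (Hsigma i)). Qed.

Lemma fam_addNl u : vadd (fam_opp u) u = fam0.
Proof. extensionality i. apply (tplusNl (Hsigma i)). Qed.

Lemma fam_actDr a u v : act a (vadd u v) = vadd (act a u) (act a v).
Proof. extensionality i. apply (mul_tplusr (Hsigma i)). Qed.

Lemma fam_actM a b u : act (mul a b) u = act a (act b u).
Proof. extensionality i. unfold fam_act. rewrite (autM (Hrho i)). symmetry. apply mulA. Qed.

Lemma fam_act1 u : act one u = u.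
Proof. extensionality i. unfold fam_act. rewrite (aut1 (Hrho i)). apply mul1l. Qed.

Lemma fam_act0 u : act zero u = fam0.
Proof. extensionality i. unfold fam_act. rewrite (aut0 (Hrho i)). apply mul0r. Qed.

Lemma fam_actN1 u : vadd (act (opp one) u) u = fam0.
Proof.
  extensionality i. unfold fam_add, fam_act, tplus.
  rewrite (autM (Hsigma i)), (autN1 (Hrho i)), (autN1 (Hsigma i)), add_mulN1l.
  apply (auti0 (Hsigma i)).
Qed.

Lemma fam_act_free a b u : act a u = act b u -> u = fam0 \/ a = b.
Proof.
  intro E. destruct (classic (exists i, u i <> zero)) as [[i Hi]|Hu].
  - right. apply (f_equal (fun f => f i)) in E. apply (mulIf Hi) in E.
    rewrite <- (autK (Hrho i) a), <- (autK (Hrho i) b), E. reflexivity.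
  - left. extensionality i. apply NNPP. intro Hi. apply Hu. exists i. exact Hi.
Qed.

Lemma fam_act_single a j c : act a (single j c) = single j (mul (rho j a) c).
Proof.
  extensionality i. unfold fam_act, single.
  destruct (excluded_middle_informative (i = j)) as [->|]; [reflexivity|apply mulr0].
Qed.

Lemma fam_add_single j c d :
  vadd (single j c) (single j d) = single j (tplus add (sigma j) (sigmainv j) c d).
Proof.
  extensionality i. unfold fam_add, single.
  destruct (excluded_middle_informative (i = j)) as [->|]; [reflexivity|].
  apply (tplus0l (Hsigma i)).
Qed.

Lemma single_quasi_kernel j c : quasi_kernel supp vadd act (single j c).
Proof.
  split; [apply fin_supp_single|]. intros a b.
  rewrite !fam_act_single, fam_add_single.
  destruct (classic (c = zero)) as [->|Hc].
  - exists zero. rewrite fam_act_single, !mulr0. f_equal. apply (tplus0l (Hsigma j)).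
  - set (s := tplus add (sigma j) (sigmainv j) (mul (rho j a) c) (mul (rho j b) c)).
    exists (rhoinv j (mul s (inv c))).
    rewrite fam_act_single, (autiK (Hrho j)), divfK by exact Hc. reflexivity.
Qed.

Lemma fin_supp_generated_by_qk : generated_by_qk supp vadd act fam0.
Proof.
  intros T _ T0 TD _ Tqk v [l Hl]. revert v Hl.
  induction l as [|j l IH]; intros v Hl.
  - replace v with fam0; [exact T0|]. extensionality i. symmetry. apply Hl. intros [].
  - set (w := fun i => if excluded_middle_informative (i = j) then zero else v i).
    assert (Ev : vadd (single j (v j)) w = v).
    { extensionality i. unfold fam_add, single, w.
      destruct (excluded_middle_informative (i = j)) as [->|].
      - rewrite tplusC. apply (tplus0l (Hsigma j)).
      - apply (tplus0l (Hsigma i)). }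
    rewrite <- Ev. apply TD; [apply Tqk, single_quasi_kernel|].
    apply IH. intros i Hi. unfold w.
    destruct (excluded_middle_informative (i = j)) as [|Hij]; [reflexivity|].
    apply Hl. intros [E|E]; [exact (Hij (eq_sym E))|exact (Hi E)].
Qed.

Lemma fam_near_vector_space : is_near_vector_space mul zero one opp supp vadd act.
Proof.
  exists fam0.
  split; [exact fin_supp0|].
  split; [exact fin_supp_add|].
  split; [intros; apply fam_addA|].
  split; [intros; apply fam_addC|].
  split; [intros; apply fam_add0l|].
  split; [intros u Hu; exists (fam_opp u); split; [apply fin_supp_opp, Hu|apply fam_addNl]|].
  split; [intros; apply fin_supp_act; assumption|].
  split; [intros; apply fam_actDr|].
  split; [intros; apply fam_actM|].
  split; [intros; apply fam_act1|].
  split; [intros; apply fam_act0|].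
  split; [intros; apply fam_actN1|].
  split; [intros a b u _; apply fam_act_free|].
  exact fin_supp_generated_by_qk.
Qed.

Lemma fam_act_unit a j : act a (unit_fam zero one j) = single j (rho j a).
Proof.
  extensionality i. unfold fam_act, unit_fam, single.
  destruct (excluded_middle_informative (i = j)) as [->|]; [apply mul1r|apply mulr0].
Qed.

Lemma tplus_single_scalar j g a b :
  g <> zero ->
  tplus add (sigma j) (sigmainv j) (mul (rho j a) (rho j g)) (mul (rho j b) (rho j g))
  = mul (rho j (tplus add (fun x => sigma j (rho j (phi mul inv g x)))
                          (fun x => phiinv mul inv g (rhoinv j (sigmainv j x))) a b))
        (rho j g).
Proof.
  intro Hg. rewrite (tplus_mulr (Hsigma j)) by exact (aut_neq0 (Hrho j) Hg).
  f_equal. unfold tplus.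
  rewrite (aut_phiinv (Hrho j)), (autiK (Hrho j)), !(aut_phi (Hrho j)) by exact Hg.
  reflexivity.
Qed.

End Families.
End NearField.

Theorem mainTheorem6 (F : Type) (add mul : F -> F -> F) (zero one : F)
  (opp inv : F -> F) (HF : is_near_field add mul zero one opp inv)
  (I : Type) (sigma sigmainv rho rhoinv : I -> F -> F)
  (Hsigma : forall i, is_mul_aut mul one (sigma i) (sigmainv i))
  (Hrho : forall i, is_mul_aut mul one (rho i) (rhoinv i)) :
  is_near_vector_space mul zero one opp (fin_supp zero)
    (fam_add add sigma sigmainv) (fam_act mul rho) /\
  forall (j : I) (g : F), g <> zero ->
    let w := fam_act mul rho g (unit_fam zero one j) in
    quasi_kernel (fin_supp zero) (fam_add add sigma sigmainv) (fam_act mul rho) w /\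
    forall a b : F,
      fam_add add sigma sigmainv (fam_act mul rho a w) (fam_act mul rho b w)
      = fam_act mul rho
          (tplus add (fun x => sigma j (rho j (phi mul inv g x)))
                     (fun x => phiinv mul inv g (rhoinv j (sigmainv j x))) a b) w.
Proof.
  split; [exact (fam_near_vector_space HF _ _ _ _ Hsigma Hrho)|].
  intros j g Hg w. unfold w. rewrite !(fam_act_unit HF).
  split; [exact (single_quasi_kernel HF _ _ _ _ Hsigma Hrho _ _)|].
  intros a b. rewrite !(fam_act_single HF), (fam_add_single HF _ _ Hsigma).
  rewrite (tplus_single_scalar HF _ _ _ _ Hsigma Hrho) by exact Hg. reflexivity.
Qed.
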